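(* Let $1\le k\le n$ be integers, $\boldsymbol c\in\mathbb{R}^n$, and $\boldsymbol E\in\mathbb{R}^{n\times d}$ with unit-norm rows $\boldsymbol e_1,\dots,\boldsymbol e_n$ satisfying $\boldsymbol e_i^{\mathsf T}\boldsymbol e_j>-1$ for all $i\ne j$. Let $\lambda\ge 2$, $\theta\in[0,1)$, and $$f(\boldsymbol x)=\theta\,(k-1)\,\boldsymbol c^{\mathsf T}\boldsymbol x+(1-\theta)\,\boldsymbol x^{\mathsf T}(\lambda \boldsymbol I-\boldsymbol E\boldsymbol E^{\mathsf T})\boldsymbol x ,$$ considered on the feasible set $P=\{\boldsymbol x\in[0,1]^n:\boldsymbol 1^{\mathsf T}\boldsymbol x=k\}$. Then every stationary point $\boldsymbol x\in P$ of $\max_{P} f$ is either a local maximizer of $f$ on $P$, or a strict saddle in the following sense: there exist distinct indices $i,j$ and $\delta>0$ such that $\boldsymbol x+\delta(\boldsymbol e^{(i)}-\boldsymbol e^{(j)})\in P$, $\partial_i f(\boldsymbol x)=\partial_j f(\boldsymbol x)$, and the curvature $(\boldsymbol e^{(i)}-\boldsymbol e^{(j)})^{\mathsf T}\nabla^2 f\,(\boldsymbol e^{(i)}-\boldsymbol e^{(j)})=4(1-\theta)(\lambda-1+\boldsymbol e_i^{\mathsf T}\boldsymbol e_j)$ is strictly positive, so that $f(\boldsymbol x+\delta(\boldsymbol e^{(i)}-\boldsymbol e^{(j)}))>f(\boldsymbol x)$. Furthermore, every local maximizer of $f$ on $P$ is integral, i.e. lies in $\{0,1\}^n$.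
   Context: Here $\boldsymbol e^{(i)}$ denotes the $i$-th standard basis vector of $\mathbb{R}^n$ (distinct from the row $\boldsymbol e_i$ of $\boldsymbol E$). A stationary point is a KKT point of $\max_P f$: there is $\mu\in\mathbb{R}$ with $\partial_i f(\boldsymbol x)\le\mu$ whenever $x_i=0$, $\partial_i f(\boldsymbol x)\ge\mu$ whenever $x_i=1$, and $\partial_i f(\boldsymbol x)=\mu$ whenever $0<x_i<1$. A local maximizer is a point $\boldsymbol x^\ast\in P$ with $f(\boldsymbol x)\le f(\boldsymbol x^\ast)$ for all $\boldsymbol x\in P$ in some neighborhood of $\boldsymbol x^\ast$. *)

From HB Require Import structures.
From mathcomp Require Import all_boot all_order all_algebra.
From mathcomp Require Import all_classical all_reals all_analysis.
Set Implicit Arguments. Unset Strict Implicit. Unset Printing Implicit Defensive.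
Import Order.TTheory GRing.Theory Num.Theory.
Import numFieldNormedType.Exports.
Local Open Scope ring_scope.
Local Open Scope classical_set_scope.

Section Defs.
Variable R : realType.

Definition ebasis (n : nat) (i : 'I_n) : 'rV[R]_n := delta_mx 0 i.

Definition rowdot (n d : nat) (E : 'M[R]_(n, d)) (a b : 'I_n) : R :=
  \sum_(l < d) E a l * E b l.

Definition fobj (n d k : nat) (theta lambda : R) (c : 'rV[R]_n)
  (E : 'M[R]_(n, d)) (x : 'rV[R]_n) : R :=
  theta * (k%:R - 1) * (c *m x^T) 0 0
  + (1 - theta) * (x *m (lambda%:M - E *m E^T) *m x^T) 0 0.

Definition feasible (n k : nat) (x : 'rV[R]_n) : Prop :=
  (forall i, 0 <= x 0 i <= 1) /\ \sum_(i < n) x 0 i = k%:R.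

Definition partial n (f : 'rV[R]_n -> R) (x : 'rV[R]_n) (i : 'I_n) : R :=
  'D_(ebasis i) f x.

(* KKT stationary point of max_P f *)
Definition stationary n (f : 'rV[R]_n -> R) (x : 'rV[R]_n) : Prop :=
  exists mu : R, forall i : 'I_n,
    (x 0 i = 0 -> partial f x i <= mu) /\
    (x 0 i = 1 -> partial f x i >= mu) /\
    (0 < x 0 i < 1 -> partial f x i = mu).

Definition local_max n (P : 'rV[R]_n -> Prop) (f : 'rV[R]_n -> R)
  (x : 'rV[R]_n) : Prop :=
  P x /\ \forall y \near x, P y -> f y <= f x.

Definition curvature n (f : 'rV[R]_n -> R) (x u : 'rV[R]_n) : R :=
  'D_u (fun y => 'D_u f y) x.

End Defs.

(* The objective is the quadratic function x |-> q x^T + x Q x^T with q = theta (k - 1) c and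
   Q = (1 - theta) (lambda I - E E^T).  Exchange directions e^(i) - e^(j) preserve 1^T x, and
   along them the curvature 2 (Q_ii + Q_jj - 2 Q_ij) = 4 (1 - theta) (lambda - 1 + e_i^T e_j)
   is positive.  Since 1^T x = k is an integer, a fractional coordinate of x in P comes with a
   second one, and x can be moved both ways along the corresponding exchange direction inside P;
   by positive curvature f increases on one side, so local maximizers are integral, and at a
   fractional stationary point, where the two partials agree, f increases on both sides.
   At an integral stationary point either a 0-coordinate and a 1-coordinate have equal partials
   (exchanging them is a strict ascent), or the KKT inequalities hold with a positive margin;
   then, for feasible y near x, the first-order change is at most minus the margin times the
   mass s that y moves onto the zero coordinates of x, while the second-order term is O(s^2). *)

From HB Require Import structures.
From mathcomp Require Import all_boot all_order all_algebra.
From mathcomp Require Import all_classical all_reals all_analysis.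
From mathcomp Require Import ring lra.
Set Implicit Arguments. Unset Strict Implicit.
Import Order.TTheory GRing.Theory Num.Theory.
Import numFieldNormedType.Exports.
Local Open Scope ring_scope.
Local Open Scope classical_set_scope.

Lemma mul_trmxE (R : ringType) n (u v : 'rV[R]_n) :
  (u *m v^T) 0 0 = \sum_i u 0 i * v 0 i.
Proof. by rewrite mxE; apply: eq_bigr => i _; rewrite mxE. Qed.

Lemma mul_tr_deltaE (R : ringType) n (u : 'rV[R]_n) i :
  (u *m (delta_mx 0 i : 'rV_n)^T) 0 0 = u 0 i.
Proof. by rewrite trmx_delta -colE mxE. Qed.

Lemma entryD (R : ringType) m n (A B : 'M[R]_(m, n)) i j : (A + B) i j = A i j + B i j.
Proof. by rewrite !mxE. Qed.

Lemma entryB (R : ringType) m n (A B : 'M[R]_(m, n)) i j : (A - B) i j = A i j - B i j.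
Proof. by rewrite !mxE. Qed.

Lemma entryZ (R : ringType) m n (A : 'M[R]_(m, n)) a i j : (a *: A) i j = a * A i j.
Proof. by rewrite !mxE. Qed.

Lemma unit_interval_cases (R : realDomainType) (a : R) :
  0 <= a <= 1 -> [\/ a = 0, a = 1 | 0 < a < 1].
Proof.
case/andP=> a0 a1; have [->|a_neq0] := eqVneq a 0; first by constructor 1.
have [->|a_neq1] := eqVneq a 1; first by constructor 2.
by constructor 3; rewrite !lt_neqAle eq_sym a_neq0 a_neq1 a0 a1.
Qed.

Lemma intr_not_in01 (R : realDomainType) (z : int) : ~~ (0 < (z%:~R : R) < 1).
Proof. by rewrite ltr0z ltrz1; case: z => [[|m]|m]. Qed.

Lemma separation_margin (R : realDomainType) (T : finType) (A B : pred T) (g : T -> R) :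
  (forall a b, A a -> B b -> g a < g b) ->
  exists mu ga, [/\ 0 < ga, forall a, A a -> g a <= mu - ga & forall b, B b -> mu <= g b].
Proof.
move=> ltAB; pose S := \sum_t `|g t|.
have normS t : `|g t| <= S by rewrite /S (bigD1 t) //= lerDl sumr_ge0.
case: (pickP B) => [b0 Bb0 | B0].
  case: (pickP A) => [a0 Aa0 | A0].
    have [b Bb bmin] := arg_minP g Bb0; have [a Aa amax] := arg_maxP g Aa0.
    exists (g b), (g b - g a); split=> [|a' Aa'|]; first by rewrite subr_gt0 ltAB.
      by rewrite opprB addrC subrK; apply: amax.
    exact: bmin.
  exists (- S), 1; split=> // [a|b _]; first by rewrite A0.
  by have := normS b; have := ler_norm (- g b); rewrite normrN; lra.
exists (S + 1), 1; split=> // [a _|b]; last by rewrite B0.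
by have := normS a; have := ler_norm (g a); lra.
Qed.

Lemma normr_entry_le (R : realDomainType) m n (M : 'M[R]_(m.+1, n)) i j :
  `|M i j| <= `|M|.
Proof.
rewrite [X in _ <= X]mx_normrE.
exact: (le_bigmax _ (fun ij : 'I_m.+1 * 'I_n => `|M ij.1 ij.2|) (i, j)).
Qed.

Lemma sum_entries_le_norm (R : realDomainType) n (P : pred 'I_n) (v : 'rV[R]_n) :
  \sum_(l | P l) v 0 l <= n%:R * `|v|.
Proof.
apply: (@le_trans _ _ (\sum_(l < n) `|v|)); last by rewrite sumr_const card_ord mulr_natl.
rewrite big_mkcond /=; apply: ler_sum => l _.
case: (P l); last exact: normr_ge0.
exact: le_trans (ler_norm _) (normr_entry_le _ _ _).
Qed.

Lemma derive_quadratic (R : realType) (V : normedModType R) (F : V -> R) a v (A B : R) :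
  (forall h : R, F (h *: v + a) = F a + h * A + h ^+ 2 * B) -> 'D_v F a = A.
Proof.
move=> FE; rewrite /derive; apply: cvg_lim => //.
apply: (@cvg_trans _ ((fun h : R => A + h * B) @ 0^')).
  apply: near_eq_cvg; near=> h.
  have h0 : h != 0 by near: h; exact: nbhs_dnbhs_neq.
  rewrite /= FE /GRing.scale /=; field; exact: h0.
apply: cvg_within_filter.
have : (fun h : R => A + h * B) @ (0:R) --> A + 0 * B.
  by apply: cvgD; [exact: cvg_cst | apply: cvgM; [exact: cvg_id | exact: cvg_cst]].
by rewrite mul0r addr0.
Unshelve. all: by end_near.
Qed.

Lemma near_line (R : realType) (V : normedModType R) (P : V -> Prop) x u :
  (\forall y \near x, P y) -> exists2 e : R, 0 < e & forall t, `|t| < e -> P (x + t *: u).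
Proof.
move=> Px.
have cv : (fun t : R => x + t *: u) @ 0 --> x.
  rewrite -[X in _ --> X]addr0 -(scale0r u).
  by apply: cvgD; [exact: cvg_cst | apply: cvgZ; [exact: cvg_id | exact: cvg_cst]].
have /nbhs_normP[e e0 he] := cv _ Px.
by exists e => // t te; apply: he; rewrite /= sub0r normrN.
Qed.

Section QuadraticFunction.
Variables (R : realType) (n : nat) (q : 'rV[R]_n) (Q : 'M[R]_n).

Definition bform (u v : 'rV[R]_n) : R := (u *m Q *m v^T) 0 0.
Definition quadf (x : 'rV[R]_n) : R := (q *m x^T) 0 0 + bform x x.
Definition grad (x : 'rV[R]_n) : 'rV[R]_n := q + 2 *: (x *m Q).

Lemma bformDl u v w : bform (u + v) w = bform u w + bform v w.
Proof. by rewrite /bform !mulmxDl mxE. Qed.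

Lemma bformDr u v w : bform u (v + w) = bform u v + bform u w.
Proof. by rewrite /bform linearD mulmxDr mxE. Qed.

Lemma bformZl a u v : bform (a *: u) v = a * bform u v.
Proof. by rewrite /bform -!scalemxAl mxE. Qed.

Lemma bformZr a u v : bform u (a *: v) = a * bform u v.
Proof. by rewrite /bform linearZ -scalemxAr mxE. Qed.

Lemma bformBl u v w : bform (u - v) w = bform u w - bform v w.
Proof. by rewrite bformDl -scaleN1r bformZl mulN1r. Qed.

Lemma bformBr u v w : bform u (v - w) = bform u v - bform u w.
Proof. by rewrite bformDr -scaleN1r bformZr mulN1r. Qed.

Lemma bformE u v : bform u v = \sum_i \sum_j u 0 i * Q i j * v 0 j.
Proof.
rewrite /bform mul_trmxE [RHS]exchange_big; apply: eq_bigr => j _ /=.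
by rewrite mxE mulr_suml.
Qed.

Lemma bform_ebasis i j : bform (ebasis R i) (ebasis R j) = Q i j.
Proof. by rewrite /bform mul_tr_deltaE -rowE mxE. Qed.

Lemma bform_pair i j : bform (ebasis R i - ebasis R j) (ebasis R i - ebasis R j)
  = Q i i + Q j j - Q i j - Q j i.
Proof. by rewrite !(bformBl, bformBr) !bform_ebasis; ring. Qed.

Lemma bform_le_sq (h : 'rV[R]_n) s : (forall l, `|h 0 l| <= s) ->
  bform h h <= (\sum_i \sum_j `|Q i j|) * s ^+ 2.
Proof.
move=> hs; rewrite bformE mulr_suml; apply: ler_sum => i _; rewrite mulr_suml.
apply: ler_sum => j _; have s0 := le_trans (normr_ge0 _) (hs i).
apply: le_trans (ler_norm _) _.
rewrite !normrM expr2 mulrA ler_pM ?mulr_ge0 ?hs //.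
by rewrite mulrC ler_wpM2l.
Qed.

Hypothesis QT : Q^T = Q.

Lemma bformC u v : bform u v = bform v u.
Proof.
rewrite /bform; have -> : (u *m Q *m v^T) 0 0 = ((u *m Q *m v^T)^T) 0 0 by rewrite [RHS]mxE.
by rewrite !trmx_mul trmxK QT mulmxA.
Qed.

Lemma quadf_line x u t :
  quadf (x + t *: u) = quadf x + t * (grad x *m u^T) 0 0 + t ^+ 2 * bform u u.
Proof.
rewrite /quadf !(bformDl, bformDr, bformZl, bformZr) (bformC u x).
rewrite /grad mulmxDl -scalemxAl linearD linearZ /= mulmxDr -scalemxAr.
by rewrite !(entryD, entryZ) -/(bform x u); ring.
Qed.

Lemma quadfD x h : quadf (x + h) = quadf x + (grad x *m h^T) 0 0 + bform h h.
Proof. by have := quadf_line x h 1; rewrite scale1r mul1r expr1n mul1r. Qed.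

Lemma derive_quadf x u : 'D_u quadf x = (grad x *m u^T) 0 0.
Proof. by apply: derive_quadratic => t; rewrite addrC quadf_line. Qed.

Lemma partial_quadf x i : partial quadf x i = grad x 0 i.
Proof. by rewrite /partial derive_quadf mul_tr_deltaE. Qed.

Lemma curvature_quadf x u : curvature quadf x u = 2 * bform u u.
Proof.
rewrite /curvature (funext (derive_quadf ^~ u)).
apply: (derive_quadratic (B := 0)) => t.
rewrite /grad !mulmxDl -!scalemxAl !mulmxDl -!scalemxAl !(entryD, entryZ) -!/(bform _ _); ring.
Qed.

End QuadraticFunction.

Section Hypersimplex.
Variables (R : realType) (n k : nat).
Implicit Types (x y : 'rV[R]_n).

Definition binary x : Prop := forall i, x 0 i = 0 \/ x 0 i = 1.

Lemma mul_tr_ebasis_pair (v : 'rV[R]_n) i j :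
  (v *m (ebasis R i - ebasis R j)^T) 0 0 = v 0 i - v 0 j.
Proof. by rewrite linearB mulmxBr entryB !mul_tr_deltaE. Qed.

Lemma feasible_move x i j t : feasible k x -> i != j -> 0 <= t ->
  t <= 1 - x 0 i -> t <= x 0 j -> feasible k (x + t *: (ebasis R i - ebasis R j)).
Proof.
move=> [x01 sumx] ij t0 ti tj.
have moveE l : (x + t *: (ebasis R i - ebasis R j)) 0 l
    = x 0 l + t * ((l == i)%:R - (l == j)%:R) by rewrite !mxE.
have sum_delta (m : 'I_n) : \sum_l (l == m)%:R = 1 :> R.
  by rewrite (bigD1 m) //= eqxx big1 ?addr0 // => l /negbTE ->.
split=> [l|].
  have := x01 l; have := x01 i; have := x01 j; rewrite moveE.
  have [->|_] := eqVneq l i; first by rewrite (negbTE ij) subr0 mulr1; lra.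
  have [->|_] := eqVneq l j; first by rewrite sub0r mulrN1; lra.
  by rewrite subr0 mulr0 addr0.
under eq_bigr do rewrite moveE.
by rewrite big_split /= -mulr_sumr sumrB !sum_delta subrr mulr0 addr0.
Qed.

Lemma feasible_frac_pair x i : feasible k x -> 0 < x 0 i < 1 ->
  exists2 j, j != i & 0 < x 0 j < 1.
Proof.
move=> [x01 sumx] fi; case: (pselect (exists2 j, j != i & 0 < x 0 j < 1)) => // no_frac.
have xjE j : j != i -> x 0 j = (x 0 j == 1)%:R.
  move=> ji; case: (unit_interval_cases (x01 j)) => [->|->|fj].
  - by rewrite eq_sym oner_eq0.
  - by rewrite eqxx.
  - by case: no_frac; exists j.
(* so x 0 i = k - #{j != i | x 0 j = 1} would be an integer *)
rewrite (bigD1 i) //= (eq_bigr _ xjE) -natr_sum in sumx.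
set m := (\sum_(j < n | j != i) _)%N in sumx.
have xiE : x 0 i = (k%:Z - m%:Z)%:~R by rewrite intrB -!pmulrn -sumx addrK.
by move/negP: (intr_not_in01 R (k%:Z - m%:Z)); rewrite -xiE.
Qed.
End Hypersimplex.

Section BinaryPoint.
Variables (R : realType) (n k : nat) (x y : 'rV[R]_n).
Hypotheses (x01 : binary x) (Py : feasible k y).

Definition inflow : R := \sum_(l | x 0 l == 0) (y - x) 0 l.

Lemma dir_zero_ge0 l : x 0 l = 0 -> 0 <= (y - x) 0 l.
Proof. by move=> xl0; rewrite entryB xl0 subr0; case/andP: (Py.1 l). Qed.

Lemma dir_one_le0 l : x 0 l = 1 -> (y - x) 0 l <= 0.
Proof. by move=> xl1; rewrite entryB xl1 subr_le0; case/andP: (Py.1 l). Qed.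

Lemma dir_nonzero_le0 l : x 0 l != 0 -> (y - x) 0 l <= 0.
Proof. by move=> /eqP xl0; case: (x01 l) => // /dir_one_le0. Qed.

Lemma inflow_ge0 : 0 <= inflow.
Proof. by apply: sumr_ge0 => l /eqP /dir_zero_ge0. Qed.

Hypothesis Px : feasible k x.

Lemma outflowE : \sum_(l | x 0 l != 0) (y - x) 0 l = - inflow.
Proof.
have : \sum_l (y - x) 0 l = 0.
  by under eq_bigr do rewrite entryB; rewrite sumrB Py.2 Px.2 subrr.
rewrite (bigID (fun l => x 0 l == 0)) /= -/inflow; lra.
Qed.

Lemma dir_le_inflow l : `|(y - x) 0 l| <= inflow.
Proof.
have [xl0|xl_neq0] := eqVneq (x 0 l) 0.
  rewrite ger0_norm ?dir_zero_ge0 // /inflow (bigD1 l) ?xl0 ?eqxx //= lerDl.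
  by apply: sumr_ge0 => l' /andP[/eqP /dir_zero_ge0].
rewrite ler0_norm ?dir_nonzero_le0 // -[inflow]opprK -outflowE lerN2.
rewrite (bigD1 l) //= gerDl; apply: sumr_le0 => l' /andP[+ _].
exact: dir_nonzero_le0.
Qed.

Lemma grad_dir_le (g : 'rV[R]_n) mu ga :
  (forall l, x 0 l = 0 -> g 0 l <= mu - ga) -> (forall l, x 0 l = 1 -> mu <= g 0 l) ->
  (g *m (y - x)^T) 0 0 <= - ga * inflow.
Proof.
move=> g_zero g_one; rewrite mul_trmxE (bigID (fun l => x 0 l == 0)) /=.
have zeros : \sum_(l | x 0 l == 0) g 0 l * (y - x) 0 l <= (mu - ga) * inflow.
  rewrite /inflow mulr_sumr; apply: ler_sum => l /eqP xl0.
  by rewrite ler_wpM2r ?dir_zero_ge0 ?g_zero.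
have ones : \sum_(l | x 0 l != 0) g 0 l * (y - x) 0 l <= mu * - inflow.
  rewrite -outflowE mulr_sumr; apply: ler_sum => l xl_neq0.
  rewrite ler_wnM2r ?dir_nonzero_le0 // g_one //.
  by case: (x01 l) => // /eqP; rewrite (negbTE xl_neq0).
by move: zeros ones; rewrite mulrN; lra.
Qed.

End BinaryPoint.

Section QuadraticOnHypersimplex.
Variables (R : realType) (n k : nat) (q : 'rV[R]_n) (Q : 'M[R]_n).
Hypothesis QT : Q^T = Q.
Local Notation f := (quadf q Q).
Local Notation g := (grad q Q).

Lemma quadf_lt_line x u t : (g x *m u^T) 0 0 = 0 -> 0 < bform Q u u -> t != 0 ->
  f x < f (x + t *: u).
Proof.
move=> gu0 Bu t0; rewrite quadf_line // gu0 mulr0 addr0 ltrDl.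
by rewrite mulr_gt0 // exprn_even_gt0 //= t0.
Qed.

Lemma local_max_of_margin x mu ga : feasible k x -> binary x -> 0 < ga ->
  (forall l, x 0 l = 0 -> g x 0 l <= mu - ga) -> (forall l, x 0 l = 1 -> mu <= g x 0 l) ->
  local_max (feasible k) f x.
Proof.
move=> Px x01 ga0 g_zero g_one; split=> //.
pose K := \sum_i \sum_j `|Q i j|.
have K0 : 0 <= K by do 2!apply: sumr_ge0 => ? _.
have Kn0 : 0 < K * n%:R + 1 by rewrite ltr_wpDl ?mulr_ge0.
pose eps := ga / (K * n%:R + 1).
have eps0 : 0 < eps by exact: divr_gt0.
(* with s := inflow x y <= n |y - x|, the linear term is <= - ga s and the quadratic one <= K s^2 *)
apply/nbhs_normP; exists eps => // y /= xy Py.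
have s0 := inflow_ge0 x Py.
have Ks : K * inflow x y <= ga.
  have e1 : K * inflow x y <= K * n%:R * eps.
    rewrite -mulrA ler_wpM2l //; apply: le_trans (sum_entries_le_norm _ _) _.
    by rewrite ler_wpM2l // distrC ltW.
  have e2 : K * n%:R * eps <= (K * n%:R + 1) * eps by rewrite ler_wpM2r ?lerDl ?ltW.
  have e3 : (K * n%:R + 1) * eps = ga by rewrite /eps mulrC divfK ?gt_eqF.
  lra.
have lin := grad_dir_le x01 Py Px g_zero g_one; rewrite mulNr in lin.
have quad : bform Q (y - x) (y - x) <= K * inflow x y ^+ 2.
  exact: bform_le_sq (dir_le_inflow x01 Py Px).
have quad' : K * inflow x y ^+ 2 <= ga * inflow x y by rewrite expr2 mulrA ler_wpM2r.
by rewrite -(subrKC x y) quadfD //; lra.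
Qed.

Lemma quadf_stationary_cases x : feasible k x -> stationary f x ->
  local_max (feasible k) f x \/
  exists i j, i != j /\ exists delta, 0 < delta /\
    feasible k (x + delta *: (ebasis R i - ebasis R j)) /\ g x 0 i = g x 0 j.
Proof.
move=> Px [mu kkt].
have {}kkt i : [/\ x 0 i = 0 -> g x 0 i <= mu, x 0 i = 1 -> mu <= g x 0 i
    & 0 < x 0 i < 1 -> g x 0 i = mu].
  by rewrite -!partial_quadf //; case: (kkt i) => ? [].
case: (pselect (exists i, 0 < x 0 i < 1)) => [[i fi]|no_frac].
  have [j ji fj] := feasible_frac_pair Px fi.
  have [_ _ /(_ fi) gi] := kkt i; have [_ _ /(_ fj) gj] := kkt j.
  case/andP: fi => xi0 xi1; case/andP: fj => xj0 xj1.
  right; exists i, j; split; first by rewrite eq_sym.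
  exists (Num.min (1 - x 0 i) (x 0 j)); split; first by rewrite lt_min subr_gt0 xi1.
  split; last by rewrite gi gj.
  apply: feasible_move; rewrite ?(eq_sym i) ?ge_min ?lexx ?orbT //.
  by rewrite le_min subr_ge0 (ltW xi1) ltW.
have x01 : binary x.
  move=> i; case: (unit_interval_cases (Px.1 i)) => [| |fi]; [by left|by right|].
  by case: no_frac; exists i.
case: (pselect (exists i j, [/\ x 0 i = 0, x 0 j = 1 & g x 0 i = g x 0 j]))
    => [[i [j [xi0 xj1 gij]]]|no_tie].
  have ij : i != j by apply/eqP => ij; move: xi0; rewrite ij xj1 => /eqP; rewrite oner_eq0.
  right; exists i, j; split=> //; exists 1; split=> //; split=> //.
  by apply: feasible_move; rewrite ?xi0 ?xj1 ?subr0.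
left.
have [|mu' [ga [ga0 g_zero g_one]]] :=
  @separation_margin _ _ (fun l => x 0 l == 0) (fun l => x 0 l == 1) (fun l => g x 0 l).
  move=> a b /eqP xa0 /eqP xb1; rewrite lt_neqAle; apply/andP; split.
    by apply/eqP => gab; apply: no_tie; exists a, b.
  by have [/(_ xa0) ga _ _] := kkt a; have [_ /(_ xb1) gb _] := kkt b; apply: le_trans gb.
by apply: (local_max_of_margin Px x01 ga0) => l /eqP; [exact: g_zero | exact: g_one].
Qed.

Lemma local_max_quadf_binary x :
  (forall i j, i != j -> 0 < bform Q (ebasis R i - ebasis R j) (ebasis R i - ebasis R j)) ->
  local_max (feasible k) f x -> binary x.
Proof.
move=> curv_pos [Px x_max] i.
case: (unit_interval_cases (Px.1 i)) => [| |fi]; [by left|by right|exfalso].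
have [j ji fj] := feasible_frac_pair Px fi.
have ij : i != j by rewrite eq_sym.
set u := ebasis R i - ebasis R j.
have [e e0 near_max] := near_line u x_max.
pose t := Num.min (Num.min (Num.min (x 0 i) (1 - x 0 i)) (Num.min (x 0 j) (1 - x 0 j))) (e / 2).
have t0 : 0 < t.
  case/andP: fi => xi0 xi1; case/andP: fj => xj0 xj1.
  by rewrite !lt_min xi0 xj0 !subr_gt0 xi1 xj1 divr_gt0.
have : t <= t := lexx t.
rewrite {2}/t !le_min => /andP[/andP[/andP[ti0 ti1] /andP[tj0 tj1]] te].
have Pplus : feasible k (x + t *: u) := feasible_move Px ij (ltW t0) ti1 tj0.
have Pminus : feasible k (x + (- t) *: u).
  by rewrite scaleNr -scalerN /u opprB; apply: feasible_move Px ji (ltW t0) tj1 ti0.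
have f_plus := near_max t (ltac:(rewrite gtr0_norm //; lra)) Pplus.
have f_minus := near_max (- t) (ltac:(rewrite normrN gtr0_norm //; lra)) Pminus.
have tB : 0 < t ^+ 2 * bform Q u u by rewrite mulr_gt0 ?exprn_gt0 ?curv_pos.
by move: f_plus f_minus; rewrite !quadf_line // sqrrN mulNr; lra.
Qed.
End QuadraticOnHypersimplex.

Lemma rowdotC (R : realType) n d (E : 'M[R]_(n, d)) i j : rowdot E i j = rowdot E j i.
Proof. by apply: eq_bigr => l _; rewrite mulrC. Qed.

Section Objective.
Variables (R : realType) (n d : nat) (E : 'M[R]_(n, d)) (lambda theta : R).

Definition fobj_mx : 'M[R]_n := (1 - theta) *: (lambda%:M - E *m E^T).

Lemma fobjE k c : fobj k theta lambda c E = quadf ((theta * (k%:R - 1)) *: c) fobj_mx.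
Proof.
by apply: funext => x; rewrite /fobj /quadf /bform /fobj_mx -scalemxAr -!scalemxAl !entryZ.
Qed.

Lemma fobj_mx_sym : fobj_mx^T = fobj_mx.
Proof. by rewrite /fobj_mx linearZ linearB /= tr_scalar_mx trmx_mul trmxK. Qed.

Lemma fobj_mxE i j : fobj_mx i j = (1 - theta) * (lambda * (i == j)%:R - rowdot E i j).
Proof.
rewrite /fobj_mx entryZ entryB mxE mulr_natr; congr (_ * (_ - _)).
by rewrite mxE; apply: eq_bigr => l _; rewrite mxE.
Qed.

Hypothesis unit_rows : forall i, rowdot E i i = 1.

Lemma bform_fobj_mx_pair i j : i != j ->
  bform fobj_mx (ebasis R i - ebasis R j) (ebasis R i - ebasis R j)
  = 2 * (1 - theta) * (lambda - 1 + rowdot E i j).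
Proof.
move=> ij; have ji : (j == i) = false by rewrite eq_sym (negbTE ij).
by rewrite bform_pair !fobj_mxE !eqxx (negbTE ij) ji mulr1 mulr0 !unit_rows (rowdotC E j i); ring.
Qed.
End Objective.

Theorem theorem2 (R : realType) (n d k : nat) (c : 'rV[R]_n) (E : 'M[R]_(n, d))
  (lambda theta : R) :
  (1 <= k)%N -> (k <= n)%N ->
  (forall i : 'I_n, rowdot E i i = 1) ->
  (forall i j : 'I_n, i != j -> rowdot E i j > -1) ->
  2 <= lambda -> 0 <= theta -> theta < 1 ->
  let f := fobj k theta lambda c E in
  let P := @feasible R n k in
  (forall x : 'rV[R]_n, P x -> stationary f x ->
     local_max P f x \/
     exists i j : 'I_n, i != j /\
       exists delta : R, 0 < delta /\
         P (x + delta *: (ebasis R i - ebasis R j)) /\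
         partial f x i = partial f x j /\
         curvature f x (ebasis R i - ebasis R j)
           = 4 * (1 - theta) * (lambda - 1 + rowdot E i j) /\
         0 < 4 * (1 - theta) * (lambda - 1 + rowdot E i j) /\
         f x < f (x + delta *: (ebasis R i - ebasis R j)))
  /\
  (forall x : 'rV[R]_n, local_max P f x ->
     forall i : 'I_n, x 0 i = 0 \/ x 0 i = 1).
Proof.
move=> _ _ unit_rows obtuse lambda2 _ theta1 f P; rewrite {}/f {}/P fobjE.
have QT := fobj_mx_sym E lambda theta.
have curv_pos i j : i != j -> 0 < 4 * (1 - theta) * (lambda - 1 + rowdot E i j).
  by move=> ij; have := obtuse i j ij; rewrite !pmulr_rgt0 ?subr_gt0 //; lra.
have bform_pos i j : i != j ->
    0 < bform (fobj_mx E lambda theta) (ebasis R i - ebasis R j) (ebasis R i - ebasis R j).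
  by move=> ij; have := curv_pos i j ij; rewrite bform_fobj_mx_pair //; lra.
split=> [x Px /(quadf_stationary_cases QT Px) [|[i [j [ij [delta [d0 [Pd gij]]]]]]]|x].
- by left.
- right; exists i, j; split; first done.
  exists delta; do 2 (split; first done).
  split; first by rewrite !partial_quadf.
  split; first by rewrite curvature_quadf // bform_fobj_mx_pair //; ring.
  split; first exact: curv_pos.
  apply: quadf_lt_line => //; last exact: lt0r_neq0.
  - by rewrite mul_tr_ebasis_pair gij subrr.
  - exact: bform_pos.
- move=> xmax; exact: (local_max_quadf_binary QT bform_pos xmax).
Qed.
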